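(* For a chemical reaction network satisfying (H1) and (H2): (1) the constant monomial does not appear in any derivative $x^{(\ell)}$, $\ell\ge1$, of any species $X$; (2) if $X$ is a non-intermediate species and $\ell\ge1$, every monomial of degree 1 appearing in $x^{(\ell)}$ is of the form $w$ for an intermediate species $W\in\mathscr{W}_X$, i.e., the only degree-one monomials of $x^{(\ell)}$ are among those appearing in $\dot x$.
   Context: Species are capital letters, concentrations lower-case letters. A reaction network has reactions $y\to y'$ between complexes with rate constants $k_{yy'}>0$ (vector $\mathbf{k}$); mass-action system $\dot{\mathbf{x}}=\sum k_{yy'}\mathbf{x}^y(y'-y)$. Total derivative of a polynomial: $\dot\varphi=\sum_i\frac{\partial\varphi}{\partial x_i}\dot x_i$ with $\dot x_i$ replaced by the right-hand side; $\varphi^{(\ell)}$ its $\ell$-th iterate, a polynomial in the concentration variables with coefficients polynomial in $\mathbf{k}$. A monomial ''appears in'' $\varphi^{(\ell)}$ if its coefficient is a nonzero polynomial in $\mathbf{k}$. (H1) Every connected component has the form $Y+S_0\rightleftarrows U_1\to Y+S_1\rightleftarrows\cdots\rightleftarrows U_L\to Y+S_L$ (reactions $Y+S_{j-1}\to U_j$, $U_j\to Y+S_{j-1}$, $U_j\to Y+S_j$), unique enzyme $Y$; intermediate species ($U_j$) distinct throughout the network; non-intermediates of a component pairwise distinct but may appear in other components; each complex in a unique component. $\mathscr{S}_U$ = substrates/products of the component of intermediate $U$. (H2) A partition $\mathscr{S}^{(0)}\sqcup\cdots\sqcup\mathscr{S}^{(M)}$ ($M\ge2$, nonempty, $\mathscr{S}^{(0)}$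 the intermediates) with: for each intermediate $U$ with enzyme $Y$, some $\alpha\ge1$ has $\mathscr{S}_U\subseteq\mathscr{S}^{(\alpha)}$, $Y\notin\mathscr{S}^{(\alpha)}$. An intermediate $U$ reacts to a non-intermediate $X_1$ if there is a reaction $U\to X_1+X_2$ with $X_2$ non-intermediate. $\mathscr{W}_X$ = set of intermediates that react to $X$. *)

From mathcomp Require Import all_boot all_order all_algebra.
Set Implicit Arguments. Unset Strict Implicit. Unset Printing Implicit Defensive.
Import Order.TTheory GRing.Theory Num.Theory.

(* Species form a finite type S; reactions are indexed by a finite type R,
   reaction r being src r -> tgt r, with symbolic rate constant k_r. *)

Definition xmon (S : finType) := {ffun S -> nat}.
Definition kmon (R : finType) := {ffun R -> nat}.

(* A polynomial in x with coefficients polynomials in k, over Z: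
   p a b = coefficient of x^a k^b.  So the coefficient of x^a (a polynomial
   in k) is the function (p a). *)
Definition poly (S R : finType) := xmon S -> kmon R -> int.

(* complexes: a single species A, and A + B *)
Definition cplx1 (S : finType) (A : S) : xmon S := [ffun s => nat_of_bool (s == A)].
Definition cplx2 (S : finType) (A B : S) : xmon S :=
  [ffun s => (nat_of_bool (s == A) + nat_of_bool (s == B))%N].

Definition kzero (R : finType) : kmon R := [ffun _ => 0%N].

Definition pvar (S R : finType) (X : S) : poly S R :=
  fun a b => if (a == cplx1 X) && (b == kzero R) then 1%R else 0%R.

Definition mon_le (S : finType) (y a : xmon S) : bool := [forall s, y s <= a s].
Definition msub (S : finType) (a y : xmon S) : xmon S := [ffun s => a s - y s].
Definition madd1 (S : finType) (a : xmon S) (i : S) : xmon S :=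
  [ffun s => a s + nat_of_bool (s == i)].
Definition ksub1 (R : finType) (b : kmon R) (r : R) : kmon R :=
  [ffun t => b t - nat_of_bool (t == r)].

(* Total derivative along the mass-action system
     xdot = sum_r k_r x^(src r) (tgt r - src r):
   pdot = sum_i (d p / d x_i) * sum_r k_r x^(src r) (tgt r i - src r i).
   Coefficient of x^a k^b of (dp/dx_i) * k_r x^y is
   ((a-y)_i + 1) * p((a-y)+e_i, b-e_r) when y <= a and b_r >= 1, else 0. *)
Definition tdiff (S R : finType) (src tgt : R -> xmon S) (p : poly S R) : poly S R :=
  fun a b =>
    (\sum_(i : S) \sum_(r : R)
       if mon_le (src r) a && (0 < b r)%N then
         (((tgt r i)%:Z - (src r i)%:Z) * ((msub a (src r) i).+1)%:Z
           * p (madd1 (msub a (src r)) i) (ksub1 b r))%R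
       else 0%R)%R.

Definition nderiv (S R : finType) (src tgt : R -> xmon S) (l : nat) (X : S) : poly S R :=
  iter l (tdiff src tgt) (@pvar S R X).

Definition appears (S R : finType) (p : poly S R) (a : xmon S) : Prop :=
  exists b, p a b <> 0%R.

Definition mdeg (S : finType) (a : xmon S) : nat := \sum_(s : S) a s.

(* Witness data: nc components c < nc; component c has enzyme Y c,
   length L c >= 1, substrates/products Sb c 0, ..., Sb c (L c), and
   intermediates U c 0, ..., U c (L c - 1) (U c j is U_{j+1} of the paper). *)

Definition is_inter (S : finType) (nc : nat) (L : nat -> nat) (U : nat -> nat -> S)
  (s : S) : Prop :=
  exists c j, (c < nc)%N /\ (j < L c)%N /\ U c j = s.

Definition comp_reaction (S : finType) (Y : nat -> S) (Sb U : nat -> nat -> S)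
  (c j : nat) (y y' : xmon S) : Prop :=
  (y = cplx2 (Y c) (Sb c j) /\ y' = cplx1 (U c j)) \/
  (y = cplx1 (U c j) /\ y' = cplx2 (Y c) (Sb c j)) \/
  (y = cplx1 (U c j) /\ y' = cplx2 (Y c) (Sb c j.+1)).

Definition H1 (S R : finType) (src tgt : R -> xmon S)
  (nc : nat) (Y : nat -> S) (L : nat -> nat) (Sb U : nat -> nat -> S) : Prop :=
  injective (fun r => (src r, tgt r)) /\
  (forall c, (c < nc)%N -> (0 < L c)%N) /\
  (forall r, exists c j, [/\ (c < nc)%N, (j < L c)%N & comp_reaction Y Sb U c j (src r) (tgt r)]) /\
  (forall c j y y', (c < nc)%N -> (j < L c)%N -> comp_reaction Y Sb U c j y y' ->
      exists r, src r = y /\ tgt r = y') /\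
  (forall c j c' j', (c < nc)%N -> (j < L c)%N -> (c' < nc)%N -> (j' < L c')%N ->
      U c j = U c' j' -> c = c' /\ j = j') /\
  (forall c j, (c < nc)%N -> (j <= L c)%N -> Y c <> Sb c j) /\
  (forall c j j', (c < nc)%N -> (j <= L c)%N -> (j' <= L c)%N -> Sb c j = Sb c j' -> j = j') /\
  (forall c, (c < nc)%N -> ~ is_inter nc L U (Y c)) /\
  (forall c j, (c < nc)%N -> (j <= L c)%N -> ~ is_inter nc L U (Sb c j)) /\
  (forall c j c' j', (c < nc)%N -> (j <= L c)%N -> (c' < nc)%N -> (j' <= L c')%N ->
      cplx2 (Y c) (Sb c j) = cplx2 (Y c') (Sb c' j') -> c = c').

(* Partition S^(0) ⊔ ... ⊔ S^(M) given by the block index P : S -> nat. *)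
Definition H2 (S : finType) (nc : nat) (Y : nat -> S) (L : nat -> nat)
  (Sb U : nat -> nat -> S) (M : nat) (P : S -> nat) : Prop :=
  (2 <= M)%N /\
  (forall s, (P s <= M)%N) /\
  (forall al, (al <= M)%N -> exists s, P s = al) /\
  (forall s, P s = 0%N <-> is_inter nc L U s) /\
  (forall c, (c < nc)%N -> (0 < L c)%N ->
     exists al, [/\ (1 <= al)%N,
                    (forall j, (j <= L c)%N -> P (Sb c j) = al) &
                    P (Y c) <> al]).

Definition reacts_to (S R : finType) (src tgt : R -> xmon S)
  (nc : nat) (L : nat -> nat) (U : nat -> nat -> S) (W X : S) : Prop :=
  is_inter nc L U W /\
  exists r X2, [/\ src r = cplx1 W, tgt r = cplx2 X X2 & ~ is_inter nc L U X2].

From Pilot Require Import Defs.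
From mathcomp Require Import all_boot all_order all_algebra.
From mathcomp Require Import zify.
Import Order.TTheory GRing.Theory Num.Theory.

(* The coefficient of x^a k^b in the total derivative of p is a
   sum over reactions r whose source complex divides x^a.  Hence:
   - if no source complex is the empty complex, the constant monomial never
     appears in a total derivative (part 1);
   - if moreover a = e_W has degree one, only reactions with source exactly
     W contribute, and the contribution is a sum of
       (tgt r i - src r i) * [coefficient of x_i in p],
     so e_W appears in pdot only if some x_i appears in p for a species i
     whose stoichiometry is changed by a reaction W -> ... .
   Under (H1) every reaction is either bimolecular (source Y + S with Y <> S)
   or the decay of an intermediate into two non-intermediates.  For a decay
   W -> A + B the changed species are W, A and B.  By induction on l, every
   degree-one monomial e_W of x^(l) (X non-intermediate) has W reacting to X:
   in the base case the changed species is X itself, so X is A or B; in the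
   inductive step it is an intermediate, hence W itself (part 2). *)

Definition mzero (S : finType) : xmon S := [ffun _ => 0%N].

Section Complexes.
Context {S : finType}.

Lemma cplx1_inj {A B : S} : cplx1 A = cplx1 B -> A = B.
Proof. by move/ffunP/(_ A); rewrite !ffunE eqxx; case: eqP. Qed.

Lemma cplx2C (A B : S) : cplx2 A B = cplx2 B A.
Proof. by apply/ffunP => s; rewrite !ffunE addnC. Qed.

Lemma cplx1_neq0 (W : S) : cplx1 W <> mzero S.
Proof. by move/ffunP/(_ W); rewrite !ffunE eqxx. Qed.

Lemma cplx2_neq0 (A B : S) : cplx2 A B <> mzero S.
Proof. by move/ffunP/(_ A); rewrite !ffunE eqxx. Qed.

Lemma cplx2_neq_cplx1 {A B W : S} : A <> B -> cplx2 A B <> cplx1 W.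
Proof.
move=> /eqP AB /ffunP E; move: (E A) (E B).
rewrite !ffunE !eqxx [B == A]eq_sym (negPf AB) /=.
by case: (eqVneq A W) => [<-|//]; rewrite eq_sym (negPf AB).
Qed.

Lemma mon_le_cplx1 {y : xmon S} {W : S} :
  mon_le y (cplx1 W) -> y <> mzero S -> y = cplx1 W.
Proof.
move=> /forallP le_y y_nz.
have y_out s : s != W -> y s = 0%N.
  by move=> /negPf sW; move: (le_y s); rewrite ffunE sW leqn0 => /eqP.
have yW : y W = 1%N.
  case: (y W =P 0%N) (le_y W) => [yW0 _|]; last by rewrite ffunE eqxx; lia.
  exfalso; apply: y_nz; apply/ffunP => s; rewrite ffunE.
  by case: (eqVneq s W) => [->|/y_out].
by apply/ffunP => s; rewrite ffunE; case: (eqVneq s W) => [->|/y_out].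
Qed.

Lemma mdeg1 {a : xmon S} : mdeg a = 1%N -> exists W, a = cplx1 W.
Proof.
move=> deg_a; case: (pickP (fun s => 0 < a s)%N) => [W aW | a0]; last first.
  suff : mdeg a = 0%N by rewrite deg_a.
  by rewrite /mdeg big1 // => s _; move: (a0 s) => /=; case: (a s).
move: deg_a; rewrite /mdeg (bigD1 W) //= => deg_a.
have /eqP : (\sum_(s | s != W) a s = 0)%N by lia.
rewrite sum_nat_eq0 => /forall_inP a_out.
exists W; apply/ffunP => s; rewrite ffunE.
by case: (eqVneq s W) => [->|/a_out/eqP] /=; lia.
Qed.

Lemma pvar_coef {R : finType} {X : S} {a : xmon S} {b : kmon R} :
  (@pvar S R X a b != 0)%R -> a = cplx1 X.
Proof. by rewrite /pvar; case: (eqVneq a (cplx1 X)) => [->|]. Qed.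

End Complexes.

Lemma sum_neq0 {I : finType} {F : I -> int} :
  (\sum_i F i != 0)%R -> exists i, (F i != 0)%R.
Proof.
move=> sum_nz; apply/existsP; apply: contraNT sum_nz => /existsPn F0.
by apply/eqP; rewrite big1 // => i _; move: (F0 i); rewrite negbK => /eqP.
Qed.

Section TotalDerivative.
Context {S R : finType} {src tgt : R -> xmon S}.

Hypothesis src_nz : forall r, src r <> mzero S.

Lemma tdiff_const0 (p : Defs.poly S R) (b : kmon R) :
  tdiff src tgt p (mzero S) b = 0%R.
Proof.
rewrite /tdiff big1 // => i _; rewrite big1 // => r _.
case: ifP => // /andP [le_src _]; case: (src_nz r).
by apply/ffunP => s; move/forallP/(_ s): le_src; rewrite !ffunE leqn0 => /eqP.
Qed.

Lemma tdiff_unit_coef {p : Defs.poly S R} {W : S} {b : kmon R} :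
  (tdiff src tgt p (cplx1 W) b != 0)%R ->
  exists r i, [/\ src r = cplx1 W, tgt r i != src r i
                & (p (cplx1 i) (ksub1 b r) != 0)%R].
Proof.
move=> /sum_neq0 [i /sum_neq0 [r]].
case: ifP => [/andP [le_src _]|]; last by rewrite eqxx.
have src_r := mon_le_cplx1 le_src (src_nz r).
have -> : madd1 (msub (cplx1 W) (src r)) i = cplx1 i.
  by apply/ffunP => s; rewrite src_r !ffunE subnn.
rewrite ffunE src_r subnn mulr1 mulf_eq0 negb_or subr_eq0 eqz_nat.
by case/andP=> changed p_i; exists r, i; rewrite src_r.
Qed.

End TotalDerivative.

Section MassActionH1.
Context {S R : finType} {src tgt : R -> xmon S}
  {nc : nat} {Y : nat -> S} {L : nat -> nat} {Sb U : nat -> nat -> S}.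
Hypothesis H1_net : H1 src tgt nc Y L Sb U.

Let inter := is_inter nc L U.

Lemma H1_reaction_cases r :
  (exists A B, A <> B /\ src r = cplx2 A B) \/
  (exists W A B, [/\ inter W, src r = cplx1 W, tgt r = cplx2 A B,
                     ~ inter A & ~ inter B]).
Proof.
case: H1_net => [_ [_ [comp [_ [_ [Y_Sb [_ [Y_ni [Sb_ni _]]]]]]]]].
have [c [j [lt_c lt_j]]] := comp r.
case=> [[-> _]|[[-> ->]|[-> ->]]].
- by left; exists (Y c), (Sb c j); split=> //; apply: Y_Sb => //; lia.
- right; exists (U c j), (Y c), (Sb c j); split=> //; first by exists c, j.
    exact: Y_ni.
  by apply: Sb_ni => //; lia.
- right; exists (U c j), (Y c), (Sb c j.+1); split=> //; first by exists c, j.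
    exact: Y_ni.
  exact: Sb_ni.
Qed.

Lemma H1_src_nz r : src r <> mzero S.
Proof.
by case: (H1_reaction_cases r) => [[A [B [_ ->]]]|[W [A [B [_ -> _ _ _]]]]];
  [apply: cplx2_neq0 | apply: cplx1_neq0].
Qed.

Lemma H1_decay {r W i} :
  src r = cplx1 W -> tgt r i != src r i ->
  inter W /\ (i = W \/ [/\ ~ inter i & exists X2, tgt r = cplx2 i X2 /\ ~ inter X2]).
Proof.
move=> src_r changed; case: (H1_reaction_cases r) => [[A [B [AB src_AB]]]|].
  by exfalso; apply: (cplx2_neq_cplx1 (W := W) AB); rewrite -src_AB.
case=> W' [A [B [W'_i src_W' tgt_r A_ni B_ni]]].
have W'W : W' = W by apply: cplx1_inj; rewrite -src_W'.
subst W'; split=> //; case: (eqVneq i W) => [->|iW]; [by left | right].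
move: changed; rewrite src_r tgt_r !ffunE (negPf iW).
case: (eqVneq i A) => [-> _|iA]; first by split=> //; exists B.
case: (eqVneq i B) => [-> _|//]; split=> //; exists A.
by rewrite cplx2C.
Qed.

Lemma nderiv_unit_monomial {X : S} {l : nat} {W : S} {b : kmon R} :
  ~ inter X -> (nderiv src tgt l.+1 X (cplx1 W) b != 0)%R ->
  reacts_to src tgt nc L U W X.
Proof.
move=> X_ni; elim: l W b => [|l IHl] W b; rewrite /nderiv iterS;
  move=> /(tdiff_unit_coef H1_src_nz) [r [i [src_r changed coef_i]]];
  have [W_i [iW|[i_ni [X2 [tgt_r X2_ni]]]]] := H1_decay src_r changed.
(* Base case: the changed species is X, which is not the intermediate W,
   hence X is a product of the decay of W. *)
- have iX := cplx1_inj (pvar_coef coef_i).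
  by exfalso; apply: X_ni; rewrite -iX iW.
- have iX := cplx1_inj (pvar_coef coef_i).
  by split=> //; exists r, X2; rewrite -iX.
(* Inductive step: the changed species i reacts to X, so it is an
   intermediate and cannot be a product; hence i = W. *)
- by rewrite -iW; apply: IHl coef_i.
- by have [i_i _] := IHl i _ coef_i.
Qed.

End MassActionH1.

Theorem mainTheorem6 (S R : finType) (src tgt : R -> xmon S)
  (nc : nat) (Y : nat -> S) (L : nat -> nat) (Sb U : nat -> nat -> S)
  (M : nat) (P : S -> nat) :
  H1 src tgt nc Y L Sb U ->
  H2 nc Y L Sb U M P ->
  (forall (X : S) (l : nat), (1 <= l)%N ->
     ~ appears (nderiv src tgt l X) ([ffun _ => 0%N] : xmon S)) /\
  (forall (X : S) (l : nat), ~ is_inter nc L U X -> (1 <= l)%N ->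
     forall a : xmon S, mdeg a = 1%N -> appears (nderiv src tgt l X) a ->
       exists W : S, a = cplx1 W /\ reacts_to src tgt nc L U W X).
Proof.
move=> H1_net _; split.
  move=> X [|l] // _ [b]; apply; rewrite /nderiv iterS.
  exact: (tdiff_const0 (H1_src_nz H1_net)).
move=> X [|l] // X_ni _ a /mdeg1 [W ->] [b coef_W].
exists W; split=> //.
exact: (nderiv_unit_monomial H1_net X_ni (introN eqP coef_W)).
Qed.
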